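(* Let $(q_i,k_i,v_i)_{i=1}^n$ be vectors in $\mathbb{R}^d$, $A_{ij}=\exp(\langle q_i,k_j\rangle/\sqrt d)$, $V\in\mathbb{R}^{n\times d}$ with rows $v_i^\top$, $D=\mathrm{diag}(A\mathbf{1}_n)$, let $I_{\mathrm{out}}\subseteq[n]$ be nonempty with $|I_{\mathrm{out}}|=n_{\mathrm{out}}$, and define $\hat A=\frac{n}{n_{\mathrm{out}}}\big(A_{ij}\mathbf{1}\{j\in I_{\mathrm{out}}\}\big)_{i,j=1}^n$ and $\hat D=\mathrm{diag}(\hat A\mathbf{1}_n)$. Then $$\|\hat D^{-1}\hat AV-D^{-1}AV\|_{\max}\le\min\Big(\big\|(\tfrac1nD)^{-1}\big\|_{\max},\big\|(\tfrac1n\hat D)^{-1}\big\|_{\max}\Big)\Big(\frac1n\|\hat AV-AV\|_{\max}+\frac1n\|A\mathbf{1}_n-\hat A\mathbf{1}_n\|_\infty\|V\|_{\max}\Big).$$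
   Context: $\|M\|_{\max}$ denotes the largest absolute entry of a matrix $M$ and $\|\cdot\|_\infty$ the largest absolute entry of a vector. *)

From HB Require Import structures.
From mathcomp Require Import all_boot all_order all_algebra.
From mathcomp Require Import all_classical all_reals all_analysis.
Set Implicit Arguments. Unset Strict Implicit. Unset Printing Implicit Defensive.
Import Order.TTheory GRing.Theory Num.Theory.
Local Open Scope ring_scope.

(* ||M||_max : largest absolute entry (0 for empty matrices).
   For a column vector this is the sup-norm ||.||_infty. *)
Definition mxmax (R : realType) (m n : nat) (M : 'M[R]_(m, n)) : R :=
  \big[Num.max/0]_(i < m) \big[Num.max/0]_(j < n) `|M i j|.

Definition ones (R : realType) (n : nat) : 'cV[R]_n := const_mx 1.

Definition diagc (R : realType) (n : nat) (x : 'cV[R]_n) : 'M[R]_n :=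
  diag_mx x^T.

Definition attnA (R : realType) (n d : nat) (Q K : 'M[R]_(n, d)) : 'M[R]_n :=
  \matrix_(i < n, j < n)
     expR ((\sum_(l < d) Q i l * K j l) / Num.sqrt (d%:R)).

Definition attnAhat (R : realType) (n : nat) (A : 'M[R]_n) (Iout : {set 'I_n})
  : 'M[R]_n :=
  (n%:R / #|Iout|%:R) *: \matrix_(i < n, j < n) (if j \in Iout then A i j else 0).

(* Row by row, both sides compare two weighted averages p/b and q/a of the
   same column of V, with a, b the row sums of A and Ahat.  Writing
   p/b - q/a = ((p - q) + (q/a)(a - b)) / b and using |q/a| <= ||V||_max
   (A is nonnegative) bounds the error by (|p - q| + |a - b| ||V||_max) / b,
   and n/b is a diagonal entry of (Dhat/n)^-1; exchanging the roles of A and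
   Ahat gives the same bound with D, whence the minimum. *)
From mathcomp Require Import all_boot all_order all_algebra.
From mathcomp Require Import all_classical all_reals all_analysis.
From mathcomp Require Import ring.
Import Order.TTheory GRing.Theory Num.Theory.
Set Implicit Arguments. Unset Strict Implicit.
Local Open Scope ring_scope.

Lemma ratio_diff_le (R : realFieldType) (a b p q M : R) :
  0 < a -> 0 < b -> `|q| <= a * M ->
  `|p / b - q / a| <= (`|p - q| + `|a - b| * M) / b.
Proof.
move=> a_gt0 b_gt0 hq.
have -> : p / b - q / a = ((p - q) + q / a * (a - b)) / b.
  by field; rewrite !gt_eqF.
rewrite normrM [`|b^-1|]gtr0_norm ?invr_gt0 // ler_pM2r ?invr_gt0 //.
apply: le_trans (ler_normD _ _) _; rewrite lerD2l normrM mulrC.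
apply: ler_wpM2l => //.
by rewrite normrM [`|a^-1|]gtr0_norm ?invr_gt0 // ler_pdivrMr // mulrC.
Qed.

Lemma invmx_diag_mx (F : fieldType) n (d : 'rV[F]_n) :
  (forall j, d 0 j != 0) -> invmx (diag_mx d) = diag_mx (\row_j (d 0 j)^-1).
Proof.
move=> d_neq0.
have dV : diag_mx (\row_j (d 0 j)^-1) *m diag_mx d = 1%:M.
  rewrite mulmx_diag; apply/matrixP => i j; rewrite !mxE.
  by case: eqP => // _; rewrite mulVf.
have [_ d_unit] := mulmx1_unit dV.
by rewrite -[RHS]mulmx1 -(mulmxV d_unit) mulmxA dV mul1mx.
Qed.

Section RealMatrices.
Variable R : realType.

Lemma mxmax_ge0 m n (M : 'M[R]_(m, n)) : 0 <= mxmax M.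
Proof.
apply: (big_ind (fun x => 0 <= x)) => // [x y|i _]; first by rewrite le_max => ->.
by apply: (big_ind (fun x => 0 <= x)) => // x y; rewrite le_max => ->.
Qed.

Lemma mxmax_ge m n (M : 'M[R]_(m, n)) i j : `|M i j| <= mxmax M.
Proof.
rewrite /mxmax (bigD1 i) //= le_max; apply/orP; left.
by rewrite (bigD1 j) //= le_max lexx.
Qed.

Lemma mxmax_le m n (M : 'M[R]_(m, n)) c :
  0 <= c -> (forall i j, `|M i j| <= c) -> mxmax M <= c.
Proof.
move=> c_ge0 hM; apply: (big_ind (fun x => x <= c)) => // [x y|i _].
  by rewrite ge_max => ->.
by apply: (big_ind (fun x => x <= c)) => // x y; rewrite ge_max => ->.
Qed.

Lemma mxmaxN m n (M : 'M[R]_(m, n)) : mxmax (- M) = mxmax M.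
Proof. by apply: eq_bigr => i _; apply: eq_bigr => j _; rewrite mxE normrN. Qed.

Lemma mulmx_ones n (M : 'M[R]_n) i : (M *m ones R n) i 0 = \sum_j M i j.
Proof. by rewrite mxE; apply: eq_bigr => j _; rewrite mxE mulr1. Qed.

Lemma row_sum_gt0 n (M : 'M[R]_n) i j0 :
  (forall j, 0 <= M i j) -> 0 < M i j0 -> 0 < (M *m ones R n) i 0.
Proof.
move=> M_ge0 Mj0_gt0; rewrite mulmx_ones (bigD1 j0) //= ltr_pwDl //.
exact: sumr_ge0.
Qed.

Lemma norm_mulmx_le n m (M : 'M[R]_n) (V : 'M[R]_(n, m)) i l :
  (forall j, 0 <= M i j) -> `|(M *m V) i l| <= (M *m ones R n) i 0 * mxmax V.
Proof.
move=> M_ge0; rewrite mulmx_ones mxE mulr_suml.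
apply: le_trans (ler_norm_sum _ _ _) _; apply: ler_sum => j _.
by rewrite normrM ger0_norm // ler_wpM2l // mxmax_ge.
Qed.

Lemma invmx_diagc n (x : 'cV[R]_n) :
  (forall i, x i 0 != 0) -> invmx (diagc x) = diagc (\col_i (x i 0)^-1).
Proof.
move=> x_neq0; rewrite /diagc invmx_diag_mx => [|j]; last by rewrite mxE.
by congr diag_mx; apply/matrixP => i j; rewrite !mxE.
Qed.

Lemma scale_diagc n (c : R) (x : 'cV[R]_n) : c *: diagc x = diagc (c *: x).
Proof. by apply/matrixP => i j; rewrite !mxE mulrnAr. Qed.

Lemma invmx_diagc_mulmx n m (x : 'cV[R]_n) (M : 'M[R]_(n, m)) i l :
  (forall i, x i 0 != 0) -> (invmx (diagc x) *m M) i l = M i l / x i 0.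
Proof. by move=> x_neq0; rewrite invmx_diagc // mul_diag_mx !mxE mulrC. Qed.

Lemma mxmax_invmx_scale_diagc_ge n (c : R) (x : 'cV[R]_n) i :
  0 < c -> (forall i, 0 < x i 0) -> c / x i 0 <= mxmax (invmx (c^-1 *: diagc x)).
Proof.
move=> c_gt0 x_gt0; apply: le_trans (mxmax_ge _ i i).
rewrite scale_diagc invmx_diagc => [|j]; last first.
  by rewrite mxE mulf_neq0 ?invr_eq0 ?gt_eqF.
by rewrite !mxE eqxx mulr1n invfM invrK ler_norm.
Qed.

Lemma mxmax_row_normalize_diff_le n m (M N : 'M[R]_n) (V : 'M[R]_(n, m)) (c : R) :
  0 < c -> (forall i j, 0 <= M i j) ->
  (forall i, 0 < (M *m ones R n) i 0) -> (forall i, 0 < (N *m ones R n) i 0) ->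
  mxmax (invmx (diagc (N *m ones R n)) *m N *m V
         - invmx (diagc (M *m ones R n)) *m M *m V)
  <= mxmax (invmx (c^-1 *: diagc (N *m ones R n)))
     * (c^-1 * mxmax (N *m V - M *m V)
        + c^-1 * mxmax (M *m ones R n - N *m ones R n) * mxmax V).
Proof.
move=> c_gt0 M_ge0 a_gt0 b_gt0; have c_ge0 := ltW c_gt0.
set E := mxmax (N *m V - M *m V); set F := mxmax (M *m ones R n - N *m ones R n).
have EF_ge0 : 0 <= E + F * mxmax V by rewrite addr_ge0 ?mulr_ge0 ?mxmax_ge0.
have -> : c^-1 * E + c^-1 * F * mxmax V = c^-1 * (E + F * mxmax V) by ring.
apply: mxmax_le => [|i l].
  by rewrite mulr_ge0 ?mxmax_ge0 // mulr_ge0 ?invr_ge0.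
have a_neq0 k : (M *m ones R n) k 0 != 0 by rewrite lt0r_neq0.
have b_neq0 k : (N *m ones R n) k 0 != 0 by rewrite lt0r_neq0.
rewrite -!mulmxA {1}mxE [X in _ + X]mxE !invmx_diagc_mulmx //.
have E_ge : `|(N *m V) i l - (M *m V) i l| <= E.
  by have := mxmax_ge (N *m V - M *m V) i l; rewrite !mxE.
have F_ge : `|(M *m ones R n) i 0 - (N *m ones R n) i 0| <= F.
  by have := mxmax_ge (M *m ones R n - N *m ones R n) i 0; rewrite !mxE.
apply: le_trans (ratio_diff_le _ (a_gt0 i) (b_gt0 i) (norm_mulmx_le V l (M_ge0 i))) _.
apply: (@le_trans _ _ ((E + F * mxmax V) / (N *m ones R n) i 0)).
  rewrite ler_pM2r ?invr_gt0 //; apply: lerD E_ge _.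
  exact: ler_pM (normr_ge0 _) (mxmax_ge0 V) F_ge (lexx _).
have -> : (E + F * mxmax V) / (N *m ones R n) i 0
          = c / (N *m ones R n) i 0 * (c^-1 * (E + F * mxmax V)).
  by field; rewrite b_neq0 lt0r_neq0.
have cEF_ge0 : 0 <= c^-1 * (E + F * mxmax V) by rewrite mulr_ge0 ?invr_ge0.
apply: ler_pM (lexx _) => //; first exact: divr_ge0 c_ge0 (ltW (b_gt0 i)).
exact: mxmax_invmx_scale_diagc_ge.
Qed.

Lemma attnA_gt0 n d (Q K : 'M[R]_(n, d)) i j : 0 < attnA Q K i j.
Proof. by rewrite mxE expR_gt0. Qed.

Lemma attnAhatE n (A : 'M[R]_n) (Iout : {set 'I_n}) i j :
  attnAhat A Iout i j = n%:R / #|Iout|%:R * (if j \in Iout then A i j else 0).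
Proof. by rewrite !mxE. Qed.

End RealMatrices.

Theorem lemmaF1 (R : realType) (n d : nat) (Q K V : 'M[R]_(n, d))
    (Iout : {set 'I_n}) (hI : (0 < #|Iout|)%N) :
  let A := attnA Q K in
  let Ah := attnAhat A Iout in
  let D := diagc (A *m ones R n) in
  let Dh := diagc (Ah *m ones R n) in
  mxmax (invmx Dh *m Ah *m V - invmx D *m A *m V)
  <= Num.min (mxmax (invmx ((n%:R)^-1 *: D))) (mxmax (invmx ((n%:R)^-1 *: Dh)))
     * ((n%:R)^-1 * mxmax (Ah *m V - A *m V)
        + (n%:R)^-1 * mxmax (A *m ones R n - Ah *m ones R n) * mxmax V).
Proof.
cbv zeta; set A := attnA Q K; set Ah := attnAhat A Iout.
have [j0 j0_in] : exists j0, j0 \in Iout by apply/set0Pn; rewrite -card_gt0.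
have n_gt0 : 0 < (n%:R : R).
  by rewrite ltr0n -[n]card_ord (leq_trans hI (max_card _)).
have scale_gt0 : 0 < (n%:R / #|Iout|%:R : R) by rewrite divr_gt0 // ltr0n.
have A_ge0 i j : 0 <= A i j by exact/ltW/attnA_gt0.
have Ah_ge0 i j : 0 <= Ah i j.
  by rewrite attnAhatE mulr_ge0 ?(ltW scale_gt0) //; case: ifP.
have a_gt0 i : 0 < (A *m ones R n) i 0 by apply: (row_sum_gt0 _ (attnA_gt0 _ _ i j0)).
have b_gt0 i : 0 < (Ah *m ones R n) i 0.
  by apply: (row_sum_gt0 (j0 := j0)) => //; rewrite attnAhatE j0_in mulr_gt0 ?attnA_gt0.
rewrite minr_pMl; last by rewrite addr_ge0 ?mulr_ge0 ?invr_ge0 ?mxmax_ge0.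
rewrite le_min; apply/andP; split; last exact: mxmax_row_normalize_diff_le.
rewrite -mxmaxN opprB -[Ah *m V - _]opprB mxmaxN -[A *m ones R n - _]opprB mxmaxN.
exact: mxmax_row_normalize_diff_le.
Qed.
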